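(* Let $G'\subseteq G$ be digraphs (i.e. $V(G')\subseteq V(G)$, $E(G')\subseteq E(G)$), let $f$ be a discrete Morse function on $G$ and $f'=f|_{V(G')}$. Then for each $n\ge0$, $\mathrm{Crit}_n(G)\cap P_n(G')\subseteq\mathrm{Crit}_n(G')$, where criticality in $G$ is with respect to $f$ and in $G'$ with respect to $f'$. Equivalently, every allowed elementary $n$-path of $G'$ that is critical in $G$ (for $f$) is critical in $G'$ (for $f'$).
   Context: A digraph $G=(V,E)$ consists of a set $V$ and $E\subseteq(V\times V)\setminus\{(v,v)\}$; $(u,v)\in E$ is written $u\to v$. An allowed elementary $n$-path is a sequence $v_0\cdots v_n$ of vertices with $v_{i-1}\to v_i\in E$ for $1\le i\le n$. Over a commutative ring $R$ with unit, $P_n(G)$ is the free $R$-module on the allowed elementary $n$-paths of $G$ and $\mathrm{Crit}_n(G)\subseteq P_n(G)$ is the submodule spanned by the critical ones. For allowed elementary paths, $\gamma'<\gamma$ (or $\gamma>\gamma'$) means $\gamma'$ is obtained from $\gamma$ by deleting some entries. A map $f:V\to[0,+\infty)$ is a discrete Morse function on $G$ if for every allowed elementary path $v_0\cdots v_n$: (i) there is at most one index $i$ with $f(v_i)=0$ such that $v_0\cdots v_{i-1}v_{i+1}\cdots v_n$ is an allowed elementary $(n-1)$-path; (ii) there is at most one vertex $u$ with $f(u)=0$ such that for some $-1\le j\le n$ the sequence $v_0\cdots v_juv_{j+1}\cdots v_n$ (meaning $uv_0\cdots v_n$ if $j=-1$, $v_0\cdots v_nu$ if $j=n$) is an allowed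 elementary $(n+1)$-path. (The restriction of a discrete Morse function to a subdigraph is a discrete Morse function.) Set $f(v_0\cdots v_n)=\sum_if(v_i)$. An allowed elementary $n$-path $\gamma$ is critical if there is no allowed elementary $(n-1)$-path $\beta<\gamma$ with $f(\beta)=f(\gamma)$ and no allowed elementary $(n+1)$-path $\alpha>\gamma$ with $f(\alpha)=f(\gamma)$. *)

From HB Require Import structures.
From mathcomp Require Import all_boot all_order all_algebra.
From mathcomp Require Import reals.
Set Implicit Arguments. Unset Strict Implicit. Unset Printing Implicit Defensive.
Import Order.TTheory GRing.Theory Num.Theory.
Local Open Scope ring_scope.

Record digraph (T : eqType) := Digraph {
  vert : T -> Prop;
  edge : T -> T -> Prop;
  edge_vert : forall u v, edge u v -> vert u /\ vert v;
  edge_irr : forall v, ~ edge v v }.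

Definition subdigraph (T : eqType) (G' G : digraph T) : Prop :=
  (forall v, vert G' v -> vert G v) /\
  (forall u v, edge G' u v -> edge G u v).

Fixpoint edge_chain (T : eqType) (G : digraph T) (x : T) (s : seq T) : Prop :=
  match s with
  | [::] => True
  | y :: s' => edge G x y /\ edge_chain G y s'
  end.

Definition allowed (T : eqType) (G : digraph T) (n : nat) (g : seq T) : Prop :=
  size g = n.+1 /\ (forall v, v \in g -> vert G v) /\
  match g with [::] => False | x :: s => edge_chain G x s end.

Definition fpath (T : eqType) (R : realType) (f : T -> R) (g : seq T) : R :=
  \sum_(v <- g) f v.

(* discrete Morse function f : V -> [0, +oo) on G.
   (i)  at most one index i (the entry v_i = v with g = a ++ v :: b,
        i = size a) with f v_i = 0 whose deletion gives an allowed
        (n-1)-path;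
   (ii) at most one vertex u with f u = 0 whose insertion at some position
        j (g = a ++ b, size a = j, -1 <= j-1 <= n) gives an allowed
        (n+1)-path. *)
Definition discrete_Morse (T : eqType) (R : realType) (G : digraph T)
    (f : T -> R) : Prop :=
  (forall v, vert G v -> 0 <= f v) /\
  (forall n g, allowed G n g ->
     (forall m a v b a' v' b', n = m.+1 ->
        g = a ++ v :: b -> g = a' ++ v' :: b' ->
        f v = 0 -> f v' = 0 ->
        allowed G m (a ++ b) -> allowed G m (a' ++ b') ->
        size a = size a') /\
     (forall u u',
        f u = 0 -> f u' = 0 ->
        (exists a b, g = a ++ b /\ allowed G n.+1 (a ++ u :: b)) ->
        (exists a b, g = a ++ b /\ allowed G n.+1 (a ++ u' :: b)) ->
        u = u')).

(* gamma is a critical allowed elementary n-path of G w.r.t. f: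
   no allowed (n-1)-path beta < gamma and no allowed (n+1)-path
   alpha > gamma with the same f-value.  (For n = 0 there are no
   (n-1)-paths.)  "beta < gamma" = beta is obtained from gamma by deleting
   entries, i.e. beta is a subsequence of gamma. *)
Definition critical (T : eqType) (R : realType) (G : digraph T)
    (f : T -> R) (n : nat) (g : seq T) : Prop :=
  allowed G n g /\
  (forall m beta, n = m.+1 -> allowed G m beta -> subseq beta g ->
     fpath f beta <> fpath f g) /\
  (forall alpha, allowed G n.+1 alpha -> subseq g alpha ->
     fpath f alpha <> fpath f g).

From HB Require Import structures.
From mathcomp Require Import all_boot all_order all_algebra.
From mathcomp Require Import reals.

(* Every allowed path of G' is an allowed path of G, so the pairs of allowed
   paths of G' that could destroy criticality are among those of G. *)

Lemma edge_chain_subdigraph {T : eqType} {G' G : digraph T}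
    {x : T} {s : seq T} :
  subdigraph G' G -> edge_chain G' x s -> edge_chain G x s.
Proof.
move=> [_ sub_edge]; elim: s x => [//|y s IHs] x /= [exy chain_ys].
by split; [exact: sub_edge | exact: IHs].
Qed.

Lemma allowed_subdigraph {T : eqType} {G' G : digraph T}
    {n : nat} {g : seq T} :
  subdigraph G' G -> allowed G' n g -> allowed G n g.
Proof.
move=> subG [size_g [vert_g chain_g]]; have [sub_vert _] := subG.
split=> //; split; first by move=> v /vert_g /sub_vert.
by case: g {size_g vert_g} chain_g => // x s; apply: edge_chain_subdigraph.
Qed.

Theorem proposition4p2 (T : eqType) (R : realType) (G' G : digraph T)
    (f : T -> R) (n : nat) (g : seq T) :
  subdigraph G' G -> discrete_Morse G f ->
  allowed G' n g -> critical G f n g -> critical G' f n g.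
Proof.
move=> subG _ allowed'_g [_ [no_face no_coface]].
split=> //; split.
- by move=> m beta n_eq /(allowed_subdigraph subG); apply: no_face.
- by move=> alpha /(allowed_subdigraph subG); apply: no_coface.
Qed.
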